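(* The logic $\mathbf{IL}^-(\mathbf{J2}_{+},\mathbf{J5})$ does not have the finite model property with respect to simplified $\mathbf{IL}^-(\mathbf{J2}_{+},\mathbf{J5})$-frames: there exists a modal formula $A$ with $\mathbf{IL}^-(\mathbf{J2}_{+},\mathbf{J5})\nvdash A$ such that $A$ is valid in every finite simplified $\mathbf{IL}^-(\mathbf{J2}_{+},\mathbf{J5})$-frame.
   Context: Modal formulas are built from propositional variables, $\top$, $\bot$ using $\to,\lor,\land$, unary $\Box$ and binary $\rhd$; $\lnot A:=A\to\bot$, $\Diamond A:=\lnot\Box\lnot A$. The logic $\mathbf{IL}^-$ has as axioms all tautologies, $\Box(A\to B)\to(\Box A\to\Box B)$, $\Box(\Box A\to A)\to\Box A$, $(A\rhd C)\land(B\rhd C)\to(A\lor B)\rhd C$, and $\Box\lnot A\leftrightarrow A\rhd\bot$; its rules are modus ponens, necessitation, from $A\to B$ infer $C\rhd A\to C\rhd B$, and from $A\to B$ infer $B\rhd C\to A\rhd C$. $\mathbf{IL}^-(\mathbf{J2}_{+},\mathbf{J5})$ is $\mathbf{IL}^-$ plus the axiom schemes $A\rhd(B\lor C)\land B\rhd C\to A\rhd C$ and $\Diamond A\rhd A$. A simplified $\mathbf{IL}^-(\mathbf{J2}_{+},\mathbf{J5})$-frame is a triple $(W,R,S)$ with $W$ non-empty, $R$ a transitive, conversely well-founded binary relation on $W$, and $S$ a transitive binary relation on $W$ with $R\subseteq S$; it is finite if $W$ is finite. Forcing: arbitrary on variables, Boolean clauses as usual, $x\Vdash\Box A$ iff $y\Vdash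 A$ for all $y$ with $xRy$, and $x\Vdash A\rhd B$ iff for every $y$ with $xRy$ and $y\Vdash A$ there is $z$ with $xRz$, $ySz$, $z\Vdash B$. $A$ is valid in a frame if it is forced at every point under every forcing relation. *)

From mathcomp Require Import all_boot.

Set Implicit Arguments.
Unset Strict Implicit.
Unset Printing Implicit Defensive.

Inductive formula : Type :=
| Var : nat -> formula
| Top : formula
| Bot : formula
| Imp : formula -> formula -> formula
| Or  : formula -> formula -> formula
| And : formula -> formula -> formula
| Box : formula -> formula
| Rhd : formula -> formula -> formula.

Definition Neg (A : formula) : formula := Imp A Bot.
Definition Dia (A : formula) : formula := Neg (Box (Neg A)).
Definition Iff (A B : formula) : formula := And (Imp A B) (Imp B A).

Fixpoint peval (v : formula -> bool) (A : formula) : bool :=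
  match A with
  | Var _ => v A
  | Top => true
  | Bot => false
  | Imp B C => (~~ peval v B) || peval v C
  | Or B C => peval v B || peval v C
  | And B C => peval v B && peval v C
  | Box _ => v A
  | Rhd _ _ => v A
  end.

Definition tautology (A : formula) : Prop := forall v, peval v A.

Inductive IL_J2p_J5 : formula -> Prop :=
| ax_taut A : tautology A -> IL_J2p_J5 A
| ax_K A B : IL_J2p_J5 (Imp (Box (Imp A B)) (Imp (Box A) (Box B)))
| ax_L A : IL_J2p_J5 (Imp (Box (Imp (Box A) A)) (Box A))
| ax_J3 A B C : IL_J2p_J5 (Imp (And (Rhd A C) (Rhd B C)) (Rhd (Or A B) C))
| ax_J4m A : IL_J2p_J5 (Iff (Box (Neg A)) (Rhd A Bot))
| ax_J2p A B C : IL_J2p_J5 (Imp (And (Rhd A (Or B C)) (Rhd B C)) (Rhd A C))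
| ax_J5 A : IL_J2p_J5 (Rhd (Dia A) A)
| r_MP A B : IL_J2p_J5 (Imp A B) -> IL_J2p_J5 A -> IL_J2p_J5 B
| r_Nec A : IL_J2p_J5 A -> IL_J2p_J5 (Box A)
| r_R1 A B C : IL_J2p_J5 (Imp A B) -> IL_J2p_J5 (Imp (Rhd C A) (Rhd C B))
| r_R2 A B C : IL_J2p_J5 (Imp A B) -> IL_J2p_J5 (Imp (Rhd B C) (Rhd A C)).

Definition transitive_rel {W : Type} (R : W -> W -> Prop) : Prop :=
  forall x y z, R x y -> R y z -> R x z.

Definition simplified_frame (W : Type) (R S : W -> W -> Prop) : Prop :=
  inhabited W /\
  transitive_rel R /\
  well_founded (fun y x => R x y) (* R conversely well-founded *) /\
  transitive_rel S /\
  (forall x y, R x y -> S x y).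

Fixpoint forces {W : Type} (R S : W -> W -> Prop) (V : nat -> W -> Prop)
  (x : W) (A : formula) : Prop :=
  match A with
  | Var p => V p x
  | Top => True
  | Bot => False
  | Imp B C => forces R S V x B -> forces R S V x C
  | Or B C => forces R S V x B \/ forces R S V x C
  | And B C => forces R S V x B /\ forces R S V x C
  | Box B => forall y, R x y -> forces R S V y B
  | Rhd B C => forall y, R x y -> forces R S V y B ->
                 exists z, R x z /\ S y z /\ forces R S V z C
  end.

Definition valid_in_frame {W : Type} (R S : W -> W -> Prop) (A : formula) : Prop :=
  forall (V : nat -> W -> Prop) (x : W), forces R S V x A.

(* Let H := Dia Top /\ (Top |> Dia Top) /\ Box (Dia Top -> ~ (Top |> Top)); the formula is ~ H.

In a finite frame, suppose x forces H. Among the R-successors a of x choose one whose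
cone {b | x R b, a S b} is smallest.  The witness b of Top |> Dia Top at a lies in that
cone, and so does every R-successor y of b; as the cone of y is included in that of a,
minimality makes the two cones equal, so y S y.  Thus b forces Top |> Top, while it also
forces Dia Top, contradicting the last conjunct of H.

Conversely H holds at the root of an infinite frame: the root R-sees the points
0, 1, 2, ..., which form the irreflexive S-chain 0 S 1 S 2 ..., and besides that only
2n R 2n+1.  As the logic is sound for simplified frames, ~ H is not provable. *)

From mathcomp Require Import all_boot.
From mathcomp Require Import boolp.

Set Implicit Arguments.
Unset Strict Implicit.

Section Soundness.
Variables (W : Type) (R S : W -> W -> Prop) (V : nat -> W -> Prop).

Local Notation "x ||- A" := (forces R S V x A) (at level 70).

Lemma peval_forces x A : peval (fun B => `[< x ||- B >]) A <-> x ||- A.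
Proof.
elim: A => [n| | |B IB C IC|B IB C IC|B IB C IC|B|B C] /=;
  try by split=> /asboolP.
- by [].
- split=> [/orP[/negP nB /IB /nB // | /IC //] | BC].
  by case: (boolP (peval _ B)) => [/IB /BC /IC -> |]; rewrite ?orbT.
- by split=> [/orP[/IB | /IC] | [/IB | /IC] ->]; [left | right | | rewrite orbT].
- by split=> [/andP[/IB ? /IC ?] | [/IB -> /IC ->]].
Qed.

Lemma forces_tautology x A : tautology A -> x ||- A.
Proof. by move=> tautA; apply/peval_forces. Qed.

Hypotheses (R_trans : transitive_rel R) (S_trans : transitive_rel S).
Hypothesis R_sub_S : forall x y, R x y -> S x y.
Hypothesis R_cwf : well_founded (fun y x => R x y).

Lemma forces_Lob x A : x ||- Imp (Box (Imp (Box A) A)) (Box A).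
Proof.
move=> LobA y; elim/(well_founded_ind R_cwf): y => y IHy xy.
by apply: (LobA y xy) => z yz; apply: IHy => //; apply: R_trans xy yz.
Qed.

Lemma forces_J2p x A B C : x ||- Imp (And (Rhd A (Or B C)) (Rhd B C)) (Rhd A C).
Proof.
move=> [AtoBC BtoC] y xy yA; have [z [xz [yz [zB|zC]]]] := AtoBC y xy yA.
- have [u [xu [zu uC]]] := BtoC z xz zB.
  by exists u; split=> //; split=> //; apply: S_trans yz zu.
- by exists z.
Qed.

Lemma forces_J5 x A : x ||- Rhd (Dia A) A.
Proof.
move=> y xy yDA; apply: contrapT => noz; apply: yDA => z yz zA.
by apply: noz; exists z; split; [apply: R_trans xy yz | split; [apply: R_sub_S|]].
Qed.

End Soundness.

Lemma IL_J2p_J5_sound (W : Type) (R S : W -> W -> Prop) A :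
  simplified_frame R S -> IL_J2p_J5 A -> valid_in_frame R S A.
Proof.
case=> _ [R_trans [R_cwf [S_trans R_sub_S]]].
elim=> {A} /=.
- by move=> A tautA V x; apply: forces_tautology.
- by move=> A B V x AB BA y xy; apply: AB xy (BA y xy).
- by move=> A V x; apply: forces_Lob.
- by move=> A B C V x [AtoC BtoC] y xy [yA|yB]; [apply: AtoC | apply: BtoC].
- move=> A V x; split=> [boxNA y xy yA | ABot y xy yA].
    by case: (boxNA y xy yA).
  by have [? [_ []]] := ABot y xy yA.
- by move=> A B C V x; apply: forces_J2p.
- by move=> A V x; apply: forces_J5.
- by move=> A B _ IAB _ IA V x; apply: IAB (IA V x).
- by move=> A _ IA V x y _; apply: IA.
- move=> A B C _ IAB V x CtoA y xy yC; have [z [xz [yz zA]]] := CtoA y xy yC.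
  by exists z; split=> //; split=> //; apply: IAB.
- by move=> A B C _ IAB V x BtoC y xy yA; apply: BtoC xy (IAB V y yA).
Qed.

Definition H_fmp : formula :=
  And (Dia Top) (And (Rhd Top (Dia Top)) (Box (Imp (Dia Top) (Neg (Rhd Top Top))))).

Section FiniteFrame.
Variables (W : finType) (R S : W -> W -> Prop).
Hypotheses (R_trans : transitive_rel R) (S_trans : transitive_rel S).
Hypothesis R_sub_S : forall x y, R x y -> S x y.

Definition cone (x a : W) : {set W} := [set b | `[< R x b /\ S a b >]].

Lemma in_cone x a b : (b \in cone x a) <-> R x b /\ S a b.
Proof. by rewrite inE; split=> /asboolP. Qed.

Lemma cone_sub x a y : S a y -> cone x y \subset cone x a.
Proof.
move=> ay; apply/subsetP => c /in_cone[xc yc].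
by apply/in_cone; split=> //; apply: S_trans ay yc.
Qed.

Lemma exists_S_reflexive_above x a0 : R x a0 ->
  exists2 a, R x a & forall b y, R x b -> S a b -> R b y -> S y y.
Proof.
move=> xa0.
case: (@arg_minnP _ a0 (fun a => `[< R x a >]) (fun a => #|cone x a|));
  first exact/asboolP.
move=> a /asboolP xa amin.
exists a => // b y xb ab yb.
have xy : R x y := R_trans xb yb.
have ay : S a y := S_trans ab (R_sub_S yb).
have /eqP cone_ya : cone x y == cone x a.
  by rewrite eqEcard cone_sub //= amin //; apply/asboolP.
by have /in_cone[] : y \in cone x y by rewrite cone_ya; apply/in_cone.
Qed.

Lemma not_forces_H_fmp V x : ~ forces R S V x H_fmp.
Proof.
move=> /= [xDT [TDT noRef]].
have [a0 xa0] : exists a0, R x a0.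
  by apply: contrapT => none; apply: xDT => a0 xa0 _; apply: none; exists a0.
have [a xa Srefl] := exists_S_reflexive_above xa0.
have [b [xb [ab bDT]]] := TDT a xa I.
apply: (noRef b xb bDT) => y bRy _.
by exists y; split=> //; split=> //; apply: Srefl bRy.
Qed.

End FiniteFrame.

Definition chainR (a b : option nat) : Prop :=
  match a, b with
  | None, Some _ => True
  | Some i, Some j => ~~ odd i /\ j = i.+1
  | _, _ => False
  end.

Definition chainS (a b : option nat) : Prop :=
  match a, b with
  | None, Some _ => True
  | Some i, Some j => i < j
  | _, _ => False
  end.

Lemma chain_simplified_frame : simplified_frame chainR chainS.
Proof.
split; first exact: (inhabits None).
split; first by case=> [i|] [j|] [k|] //= [ei ->] [/negP[]]; rewrite /= ei.
split.
  have Acc_Some i : Acc (fun y x => chainR x y) (Some i).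
    constructor=> -[j|] /= ij; last by case: ij.
    case: ij => ei ->; constructor=> -[k|] /= jk; last by case: jk.
    by case: jk; rewrite /= ei.
  case=> [i|]; first exact: Acc_Some.
  by constructor=> -[j|] ij; [exact: Acc_Some | case: ij].
split; first by case=> [i|] [j|] [k|] //=; apply: ltn_trans.
by case=> [i|] [j|] //= [_ ->].
Qed.

Lemma chain_forces_H_fmp V : forces chainR chainS V None H_fmp.
Proof.
split; last split.
- by move/(_ (Some 0)); apply.
- case=> [i|] // _ _; exists (Some i.*2.+2); split=> //; split=> /=.
    by rewrite ltnS leqW // -addnn leq_addr.
  by move/(_ (Some i.*2.+3)); apply=> //=; rewrite odd_double.
- case=> [i|] // _ iDT iTT; apply: iDT => -[j|] //= [ei _] _.
  have [[k|] [//= [_ ->] [lt_ii _]]] := iTT (Some i.+1) (conj ei erefl) I.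
  by rewrite ltnn in lt_ii.
Qed.

Theorem corollary3p4 :
  exists A : formula,
    ~ IL_J2p_J5 A /\
    (forall (W : finType) (R S : W -> W -> Prop),
        simplified_frame R S -> valid_in_frame R S A).
Proof.
exists (Neg H_fmp); split.
- move=> /(IL_J2p_J5_sound chain_simplified_frame) /(_ (fun _ _ => True) None) notH.
  exact: notH (chain_forces_H_fmp (fun _ _ => True)).
- move=> W R S [_ [R_trans [_ [S_trans R_sub_S]]]] V x.
  exact: not_forces_H_fmp.
Qed.
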